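(* If $n_1<n_2<n_3\neq N/2$, then the geometric realization of $C(n_1,n_2,n_3)$ is homeomorphic to a disjoint union of tori (one for each of its $\gcd(n_1,n_2,n_3)$ components).
   Context: Standing conventions: $N,n_1,n_2,n_3$ are positive integers with $n_1+n_2+n_3=N$ and $1\le n_1\le n_2\le n_3<N$. $C(n_1,n_2,n_3)$ denotes the abstract simplicial complex whose vertex set is $\mathbb{Z}/N$, whose 2-simplices are all sets of the form $\{k,k+n_1,k+n_1+n_2\}$ or $\{k,k-n_1,k-n_1-n_2\}$ for $k\in\mathbb{Z}/N$ (i.e. the orbit of $\{0,n_1,n_1+n_2\}$ under all translations $x\mapsto x+t$ and inversions $x\mapsto t-x$ of $\mathbb{Z}/N$), and whose 1-simplices are all sets $\{k,k+n_i\}$ with $k\in\mathbb{Z}/N$, $i\in\{1,2,3\}$. *)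

From Stdlib Require Import Reals Arith List.
Open Scope R_scope.

(* The vertex sets of the 2-simplices: the orbit of {0,n1,n1+n2} under
   translations and inversions of Z/N, i.e. {k,k+n1,k+n1+n2} and {k,k-n1,k-n1-n2}. *)
Definition is_triangle (N n1 n2 : nat) (v : nat -> Prop) : Prop :=
  exists k, (k < N)%nat /\
    ((forall i, v i <-> (i = k \/ i = (k + n1) mod N \/ i = (k + n1 + n2) mod N))
  \/ (forall i, v i <-> (i = k \/ i = (k + (N - n1)) mod N
                           \/ i = (k + (N - n1) + (N - n2)) mod N))).

Definition is_edge (N n1 n2 n3 : nat) (v : nat -> Prop) : Prop :=
  exists k, (k < N)%nat /\ exists m, (m = n1 \/ m = n2 \/ m = n3) /\
    (forall i, v i <-> (i = k \/ i = (k + m) mod N)).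

Definition is_vertex (N : nat) (v : nat -> Prop) : Prop :=
  exists k, (k < N)%nat /\ (forall i, v i <-> i = k).

Definition is_simplex (N n1 n2 n3 : nat) (v : nat -> Prop) : Prop :=
  is_triangle N n1 n2 v \/ is_edge N n1 n2 n3 v \/ is_vertex N v.

Fixpoint rsum (n : nat) (f : nat -> R) : R :=
  match n with O => 0 | S m => rsum m f + f m end.

(* Geometric realization |C(n1,n2,n3)| inside R^N (points are coordinate
   functions nat -> R vanishing from index N on): barycentric coordinates
   supported on a simplex. *)
Definition realization (N n1 n2 n3 : nat) (x : nat -> R) : Prop :=
  (forall i, (N <= i)%nat -> x i = 0) /\
  (forall i, 0 <= x i) /\
  rsum N x = 1 /\
  exists v, is_simplex N n1 n2 n3 v /\ (forall i, x i <> 0 -> v i).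

Definition distN (N : nat) (x y : nat -> R) : R := rsum N (fun i => Rabs (x i - y i)).

(* A point is (k, (a,b,c,d)) with k < g indexing the component and
   (a,b),(c,d) on the unit circle: the k-th copy of S^1 x S^1. *)
Definition tori_pt : Type := (nat * (R * R * R * R))%type.

Definition tori (g : nat) (p : tori_pt) : Prop :=
  match p with (k, (a, b, c, d)) =>
    (k < g)%nat /\ a * a + b * b = 1 /\ c * c + d * d = 1 end.

(* Metric inducing the disjoint-union topology (distinct copies at distance >= 1). *)
Definition tori_dist (p q : tori_pt) : R :=
  match p, q with (k, (a, b, c, d)), (k', (a', b', c', d')) =>
    (if Nat.eqb k k' then 0 else 1)
    + Rabs (a - a') + Rabs (b - b') + Rabs (c - c') + Rabs (d - d') end.

Definition cont_on {A B : Type} (dA : A -> A -> R) (dB : B -> B -> R)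
  (S : A -> Prop) (f : A -> B) : Prop :=
  forall x, S x -> forall eps, 0 < eps -> exists delta, 0 < delta /\
    forall y, S y -> dA x y < delta -> dB (f x) (f y) < eps.

Definition homeomorphic {A B : Type} (dA : A -> A -> R) (dB : B -> B -> R)
  (S : A -> Prop) (T : B -> Prop) : Prop :=
  exists (f : A -> B) (h : B -> A),
    (forall x, S x -> T (f x)) /\ (forall y, T y -> S (h y)) /\
    (forall x, S x -> h (f x) = x) /\ (forall y, T y -> f (h y) = y) /\
    cont_on dA dB S f /\ cont_on dB dA T h.

(* The plane, triangulated by the lines x = k, y = k and x - y = k (k integer), covers
   [C(n1,n2,n3)]: on the c-th copy of the plane the vertex (x, y) is sent to the vertex
   c + x n1 + y n2 of Z/N, and the map is extended affinely on triangles.  The copies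
   c < g = gcd(n1,n2,n3) exhaust the vertices, and the images of distinct copies are disjoint
   since labels are congruent to c modulo g.  Two vertices of one copy with the same label
   differ by an element of the lattice L = {(l1, l2) | N divides l1 n1 + l2 n2}.  Since
   n1 < n2 < n3 and 2 n3 <> N, no two vertices of a star share a label, so the map is a local
   homeomorphism identifying exactly the L-orbits, and each component is the torus R^2 / L,
   which a basis of L identifies with (R/Z)^2. *)

From Stdlib Require Import Reals Lra Lia ZArith Znumtheory Arith List Permutation
  FunctionalExtensionality ClassicalEpsilon.
Open Scope R_scope.
Import ListNotations.

Lemma Rabs_le_inv z a : Rabs z <= a -> - a <= z <= a.
Proof.
  intros H. destruct (Rcase_abs z); [rewrite Rabs_left in H | rewrite Rabs_right in H]; lra.
Qed.

Definition lsum {A : Type} (L : list A) (F : A -> R) : R :=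
  fold_right (fun q acc => F q + acc) 0 L.

Section ListSums.
Context {A : Type}.
Implicit Types (L : list A) (F G : A -> R).

Lemma lsum_perm L1 L2 F : Permutation L1 L2 -> lsum L1 F = lsum L2 F.
Proof. induction 1; simpl; lra. Qed.

Lemma lsum_nonneg L F : (forall q, 0 <= F q) -> 0 <= lsum L F.
Proof. intros H; induction L; simpl; [lra|]. specialize (H a); lra. Qed.

Lemma lsum_zero L F : (forall q, In q L -> F q = 0) -> lsum L F = 0.
Proof. induction L; simpl; intros H; [lra|]. rewrite H, IHL by auto. lra. Qed.

Lemma lsum_minus L F G : lsum L (fun q => F q - G q) = lsum L F - lsum L G.
Proof. induction L; simpl; lra. Qed.

Lemma lsum_abs_le L F : Rabs (lsum L F) <= lsum L (fun q => Rabs (F q)).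
Proof.
  induction L; simpl; [rewrite Rabs_R0; lra|].
  eapply Rle_trans; [apply Rabs_triang | lra].
Qed.

Lemma lsum_le L F G : (forall q, In q L -> F q <= G q) -> lsum L F <= lsum L G.
Proof.
  induction L; simpl; intros H; [lra|].
  assert (F a <= G a) by auto. assert (lsum L F <= lsum L G) by auto. lra.
Qed.

Lemma lsum_pos_ex L F : (forall q, 0 <= F q) -> 0 < lsum L F -> exists q, In q L /\ 0 < F q.
Proof.
  induction L; simpl; intros H1 H2; [lra|].
  destruct (Rlt_dec 0 (F a)) as [h|h]; [exists a; auto|].
  destruct IHL as [q [? ?]]; auto; [specialize (H1 a); lra | exists q; auto].
Qed.

Definition nonzerob F (q : A) : bool := if Req_EM_T (F q) 0 then false else true.

Lemma lsum_filter_nonzero L F : lsum L F = lsum (filter (nonzerob F) L) F.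
Proof.
  induction L; simpl; auto. unfold nonzerob at 1.
  destruct (Req_EM_T (F a) 0) as [E|E]; simpl; rewrite IHL; [rewrite E|]; lra.
Qed.

Lemma lsum_eq_on_support L1 L2 F : NoDup L1 -> NoDup L2 ->
  (forall q, F q <> 0 -> In q L1 /\ In q L2) -> lsum L1 F = lsum L2 F.
Proof.
  intros N1 N2 H. rewrite (lsum_filter_nonzero L1), (lsum_filter_nonzero L2).
  apply lsum_perm, NoDup_Permutation; try apply NoDup_filter; auto.
  intros q; rewrite !filter_In; unfold nonzerob.
  destruct (Req_EM_T (F q) 0); split; intros [A1 B1]; try discriminate;
    split; auto; apply H; auto.
Qed.

End ListSums.

Lemma rsum_ext n f g : (forall i, (i < n)%nat -> f i = g i) -> rsum n f = rsum n g.
Proof. induction n; simpl; intros H; auto. rewrite IHn, H by auto. auto. Qed.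

Lemma rsum_plus n f g : rsum n (fun i => f i + g i) = rsum n f + rsum n g.
Proof. induction n; simpl; lra. Qed.

Lemma rsum_const0 n : rsum n (fun _ => 0) = 0.
Proof. induction n; simpl; lra. Qed.

Lemma rsum_indicator n l c : (l < n)%nat -> rsum n (fun i => if Nat.eqb l i then c else 0) = c.
Proof.
  induction n; simpl; intros H; [lia|].
  destruct (Nat.eq_dec l n) as [->|Hne].
  - rewrite Nat.eqb_refl, (rsum_ext _ _ (fun _ => 0)), rsum_const0; [lra|].
    intros i Hi. destruct (Nat.eqb_spec n i); [lia|auto].
  - rewrite IHn by lia. destruct (Nat.eqb_spec l n); [lia|lra].
Qed.

Lemma rsum_lsum {A : Type} n (L : list A) G :
  rsum n (fun i => lsum L (G i)) = lsum L (fun q => rsum n (fun i => G i q)).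
Proof. induction L; simpl; [apply rsum_const0|]. rewrite rsum_plus, IHL. auto. Qed.

Lemma rsum_le n f g : (forall i, (i < n)%nat -> f i <= g i) -> rsum n f <= rsum n g.
Proof.
  induction n; simpl; intros H; [lra|].
  assert (f n <= g n) by (apply H; lia). assert (rsum n f <= rsum n g) by auto. lra.
Qed.

Lemma rsum_nonneg n f : (forall i, 0 <= f i) -> 0 <= rsum n f.
Proof. intros H; induction n; simpl; [lra|]. specialize (H n); lra. Qed.

Lemma rsum_term_le n f l : (forall i, 0 <= f i) -> (l < n)%nat -> f l <= rsum n f.
Proof.
  induction n; simpl; intros H Hl; [lia|]. pose proof (rsum_nonneg n f H).
  destruct (Nat.eq_dec l n) as [->|]; [lra|].
  pose proof (IHn H ltac:(lia)). specialize (H n). lra.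
Qed.

Lemma rsum_pos_ex n f : 0 < rsum n f -> exists i, (i < n)%nat /\ 0 < f i.
Proof.
  induction n; simpl; intros H; [lra|].
  destruct (Rlt_dec 0 (f n)); [exists n; split; auto; lia|].
  destruct IHn as [i [? ?]]; [lra | exists i; split; auto; lia].
Qed.

Lemma distN_term_le N x y l : (l < N)%nat -> Rabs (x l - y l) <= distN N x y.
Proof. intros; apply (rsum_term_le N (fun i => Rabs (x i - y i))); auto using Rabs_pos. Qed.

(* Barycentric coordinate of [(s, t)] at the vertex [(0, 0)] for the triangulation of the
   plane by the lines [x = k], [y = k], [x - y = k] (k integer). *)
Definition hat (s t : R) : R := Rmax 0 (1 - Rmax (Rabs s) (Rmax (Rabs t) (Rabs (s - t)))).

Ltac rmax_step :=
  match goal with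
  | |- context [Rabs ?x] =>
      destruct (Rcase_abs x);
      [rewrite (Rabs_left x) by assumption | rewrite (Rabs_right x) by assumption]
  | |- context [Rmax ?a ?b] =>
      lazymatch a with context [Rmax _ _] => fail | _ =>
      lazymatch b with context [Rmax _ _] => fail | _ =>
      destruct (Rle_lt_dec a b);
      [rewrite (Rmax_right a b) by lra | rewrite (Rmax_left a b) by lra] end end
  end.
Ltac hat_case := unfold hat; repeat rmax_step; lra.

Lemma hat_nonneg s t : 0 <= hat s t.
Proof. apply Rmax_l. Qed.

Lemma hat_pos_bounds s t : 0 < hat s t -> -1 < s < 1 /\ -1 < t < 1 /\ -1 < s - t < 1.
Proof. unfold hat. repeat rmax_step; lra. Qed.

Lemma Rmax_lipschitz a b c d : Rabs (Rmax a b - Rmax c d) <= Rabs (a - c) + Rabs (b - d).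
Proof. unfold Rmax; destruct (Rle_dec a b), (Rle_dec c d); repeat rmax_step; lra. Qed.

Lemma hat_lipschitz a b c d : Rabs (hat a b - hat c d) <= 2 * (Rabs (a - c) + Rabs (b - d)).
Proof.
  unfold hat.
  set (X := Rmax (Rabs a) (Rmax (Rabs b) (Rabs (a - b)))).
  set (Y := Rmax (Rabs c) (Rmax (Rabs d) (Rabs (c - d)))).
  pose proof (Rmax_lipschitz 0 (1 - X) 0 (1 - Y)) as H0.
  replace (0 - 0) with 0 in H0 by ring. rewrite Rabs_R0 in H0.
  replace (1 - X - (1 - Y)) with (- (X - Y)) in H0 by ring. rewrite Rabs_Ropp in H0.
  pose proof (Rmax_lipschitz (Rabs a) (Rmax (Rabs b) (Rabs (a - b)))
                             (Rabs c) (Rmax (Rabs d) (Rabs (c - d)))) as H1.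
  fold X Y in H1.
  pose proof (Rmax_lipschitz (Rabs b) (Rabs (a - b)) (Rabs d) (Rabs (c - d))).
  pose proof (Rabs_triang_inv2 a c). pose proof (Rabs_triang_inv2 b d).
  pose proof (Rabs_triang_inv2 (a - b) (c - d)).
  assert (Rabs (a - b - (c - d)) <= Rabs (a - c) + Rabs (b - d)).
  { replace (a - b - (c - d)) with ((a - c) + - (b - d)) by ring.
    eapply Rle_trans; [apply Rabs_triang | rewrite Rabs_Ropp; lra]. }
  pose proof (Rabs_pos (a - c)). pose proof (Rabs_pos (b - d)). lra.
Qed.

(* [0 < hat s t] says that [(s, t)] lies in the open star of [(0, 0)]. *)
Lemma hat_star_identity s t : 0 < hat s t ->
  s = hat (s - 1) t - hat (s + 1) t + hat (s - 1) (t - 1) - hat (s + 1) (t + 1) /\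
  t = hat s (t - 1) - hat s (t + 1) + hat (s - 1) (t - 1) - hat (s + 1) (t + 1).
Proof.
  intros H. pose proof (hat_pos_bounds _ _ H) as [[? ?] [[? ?] [? ?]]].
  destruct (Rle_dec 0 s), (Rle_dec 0 t), (Rle_dec t s); try lra;
  repeat match goal with |- context [hat ?a ?b] =>
    let v := fresh in set (v := hat a b);
    first [ assert (v = 0) by (subst v; hat_case)
          | assert (v = s - t) by (subst v; hat_case) | assert (v = t - s) by (subst v; hat_case)
          | assert (v = s) by (subst v; hat_case) | assert (v = t) by (subst v; hat_case)
          | assert (v = - s) by (subst v; hat_case) | assert (v = - t) by (subst v; hat_case) ];
    clearbody v end; lra.
Qed.

(* Barycentric coordinates of [(u, w)] in the triangles [(0,0), (1,0), (1,1)] and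
   [(0,0), (0,1), (1,1)]. *)
Definition up_weight (a b : Z) (u w : R) : R :=
  if (Z.eqb a 0 && Z.eqb b 0)%bool then 1 - u else
  if (Z.eqb a 1 && Z.eqb b 0)%bool then u - w else
  if (Z.eqb a 1 && Z.eqb b 1)%bool then w else 0.

Definition down_weight (a b : Z) (u w : R) : R :=
  if (Z.eqb a 0 && Z.eqb b 0)%bool then 1 - w else
  if (Z.eqb a 0 && Z.eqb b 1)%bool then w - u else
  if (Z.eqb a 1 && Z.eqb b 1)%bool then u else 0.

Lemma Z_cases (a : Z) : (a <= -1)%Z \/ a = 0%Z \/ a = 1%Z \/ (2 <= a)%Z.
Proof. lia. Qed.

Ltac Z_case a := destruct (Z_cases a) as [?|[?|[?|?]]];
  [ match goal with H : (a <= -1)%Z |- _ => pose proof (IZR_le _ _ H) end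
  | subst a | subst a
  | match goal with H : (2 <= a)%Z |- _ => pose proof (IZR_le _ _ H) end ].

Lemma hat_up_triangle u w a b : 0 <= w -> w <= u -> u <= 1 ->
  hat (u - IZR a) (w - IZR b) = up_weight a b u w.
Proof.
  intros. unfold up_weight. Z_case a; Z_case b; simpl;
  repeat match goal with |- context [Z.eqb ?x ?y] => destruct (Z.eqb_spec x y); try lia end;
  simpl; hat_case.
Qed.

Lemma hat_down_triangle u w a b : 0 <= u -> u <= w -> w <= 1 ->
  hat (u - IZR a) (w - IZR b) = down_weight a b u w.
Proof.
  intros. unfold down_weight. Z_case a; Z_case b; simpl;
  repeat match goal with |- context [Z.eqb ?x ?y] => destruct (Z.eqb_spec x y); try lia end;
  simpl; hat_case.
Qed.

Lemma Int_part_bounds x : IZR (Int_part x) <= x < IZR (Int_part x) + 1.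
Proof. destruct (base_Int_part x). lra. Qed.

Lemma Z_le_of_IZR_lt_succ a b : IZR a < IZR b + 1 -> (a <= b)%Z.
Proof. intros H. rewrite <- plus_IZR in H. apply lt_IZR in H. lia. Qed.

Lemma Int_part_shift x l : Int_part (x + IZR l) = (Int_part x + l)%Z.
Proof.
  symmetry. apply Int_part_spec. pose proof (Int_part_bounds x). rewrite plus_IZR. lra.
Qed.

Lemma Int_part_near a x : x - 1 < IZR a < x + 1 -> a = Int_part x \/ a = (Int_part x + 1)%Z.
Proof.
  intros H. pose proof (Int_part_bounds x).
  assert (Int_part x <= a)%Z by (apply Z_le_of_IZR_lt_succ; lra).
  assert (a <= Int_part x + 1)%Z by (apply Z_le_of_IZR_lt_succ; rewrite plus_IZR; lra).
  lia.
Qed.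

Definition pt := (Z * Z)%type.

Definition corners (s t : R) : list pt :=
  let a := Int_part s in let b := Int_part t in
  [(a, b); (a + 1, b)%Z; (a, b + 1)%Z; (a + 1, b + 1)%Z].

Lemma corners_nodup s t : NoDup (corners s t).
Proof.
  unfold corners. repeat constructor; simpl; intros H;
    repeat (destruct H as [H|H]; [injection H; lia|]); auto.
Qed.

Lemma hat_support_corners s t q :
  hat (s - IZR (fst q)) (t - IZR (snd q)) <> 0 -> In q (corners s t).
Proof.
  intros H. pose proof (hat_nonneg (s - IZR (fst q)) (t - IZR (snd q))).
  destruct (hat_pos_bounds (s - IZR (fst q)) (t - IZR (snd q)) ltac:(lra)) as [Hs [Ht _]].
  destruct q as [a b]; simpl in *.
  destruct (Int_part_near a s ltac:(lra)) as [->| ->];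
  destruct (Int_part_near b t ltac:(lra)) as [->| ->]; unfold corners; simpl; tauto.
Qed.

Definition lattice (A B NN : Z) (l1 l2 : Z) : Prop := (NN | l1 * A + l2 * B)%Z.

(* The covering map from the plane: the vertex [q] of the triangulated plane is sent to the
   vertex [label c q] of [C(n1,n2,n3)], and [cover c s t] is the image of [(s, t)] in
   barycentric coordinates.  [c] selects the connected component. *)
Section Cover.
Variables N n1 n2 : nat.
Hypothesis N_pos : (0 < N)%nat.

Notation in_lattice := (lattice (Z.of_nat n1) (Z.of_nat n2) (Z.of_nat N)).

Definition labelZ (c : nat) (q : pt) : Z :=
  ((Z.of_nat c + fst q * Z.of_nat n1 + snd q * Z.of_nat n2) mod Z.of_nat N)%Z.
Definition label (c : nat) (q : pt) : nat := Z.to_nat (labelZ c q).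

Lemma labelZ_range c q : (0 <= labelZ c q < Z.of_nat N)%Z.
Proof. apply Z.mod_pos_bound. lia. Qed.

Lemma labelZ_def c q : labelZ c q =
  ((Z.of_nat c + fst q * Z.of_nat n1 + snd q * Z.of_nat n2) mod Z.of_nat N)%Z.
Proof. reflexivity. Qed.

Lemma label_lt c q : (label c q < N)%nat.
Proof. unfold label. pose proof (labelZ_range c q). lia. Qed.

Lemma label_Z c q : Z.of_nat (label c q) = labelZ c q.
Proof. unfold label. pose proof (labelZ_range c q). lia. Qed.

Lemma label_eq_of_labelZ c q q' : labelZ c q = labelZ c q' -> label c q = label c q'.
Proof. unfold label. congruence. Qed.

Lemma labelZ_shift c x y d1 d2 : labelZ c ((x + d1)%Z, (y + d2)%Z) =
  ((labelZ c (x, y) + d1 * Z.of_nat n1 + d2 * Z.of_nat n2) mod Z.of_nat N)%Z.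
Proof.
  unfold labelZ; simpl. rewrite <- !Z.add_assoc, Z.add_mod_idemp_l by lia.
  f_equal. ring.
Qed.

Lemma label_offset c a b a' b' k :
  (Z.of_nat N | Z.of_nat k - ((a' - a) * Z.of_nat n1 + (b' - b) * Z.of_nat n2))%Z ->
  label c (a', b') = ((label c (a, b) + k) mod N)%nat.
Proof.
  intros [m Hm]. apply Nat2Z.inj.
  replace (a', b') with ((a + (a' - a))%Z, (b + (b' - b))%Z) by (f_equal; ring).
  rewrite label_Z, labelZ_shift, Nat2Z.inj_mod, Nat2Z.inj_add, label_Z.
  replace (Z.of_nat k) with ((a' - a) * Z.of_nat n1 + (b' - b) * Z.of_nat n2 + m * Z.of_nat N)%Z
    by lia.
  rewrite Z.add_assoc, (Z.add_assoc _ ((a' - a) * _)), Z.mod_add by lia. auto.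
Qed.

Lemma labelZ_eq_lattice c q q' : labelZ c q = labelZ c q' ->
  in_lattice (fst q - fst q') (snd q - snd q').
Proof.
  unfold labelZ, lattice. intros H. apply Z.mod_divide; [lia|].
  replace ((fst q - fst q') * Z.of_nat n1 + (snd q - snd q') * Z.of_nat n2)%Z with
    ((Z.of_nat c + fst q * Z.of_nat n1 + snd q * Z.of_nat n2)
     - (Z.of_nat c + fst q' * Z.of_nat n1 + snd q' * Z.of_nat n2))%Z by ring.
  rewrite Zminus_mod, H, Z.sub_diag. apply Z.mod_0_l. lia.
Qed.

Lemma label_period c x y l1 l2 : in_lattice l1 l2 ->
  label c ((x + l1)%Z, (y + l2)%Z) = label c (x, y).
Proof.
  intros Hl. rewrite (label_offset c x y _ _ 0).
  - rewrite Nat.add_0_r. apply Nat.mod_small. apply label_lt.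
  - replace (Z.of_nat 0 - ((x + l1 - x) * Z.of_nat n1 + (y + l2 - y) * Z.of_nat n2))%Z
      with (- (l1 * Z.of_nat n1 + l2 * Z.of_nat n2))%Z by ring.
    apply Z.divide_opp_r. exact Hl.
Qed.

Definition weight (c : nat) (s t : R) (i : nat) (q : pt) : R :=
  if Nat.eqb (label c q) i then hat (s - IZR (fst q)) (t - IZR (snd q)) else 0.

Definition cover (c : nat) (s t : R) (i : nat) : R := lsum (corners s t) (weight c s t i).

Lemma weight_nonneg c s t i q : 0 <= weight c s t i q.
Proof. unfold weight. destruct (Nat.eqb _ _); [apply hat_nonneg | lra]. Qed.

Lemma cover_nonneg c s t i : 0 <= cover c s t i.
Proof. apply lsum_nonneg, weight_nonneg. Qed.

Lemma cover_out c s t i : (N <= i)%nat -> cover c s t i = 0.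
Proof.
  intros. apply lsum_zero. intros q _. unfold weight. pose proof (label_lt c q).
  destruct (Nat.eqb_spec (label c q) i); [lia | auto].
Qed.

Lemma cover_as_lsum c s t L : NoDup L ->
  (forall q, hat (s - IZR (fst q)) (t - IZR (snd q)) <> 0 -> In q L) ->
  forall i, cover c s t i = lsum L (weight c s t i).
Proof.
  intros ND H i. apply lsum_eq_on_support; auto using corners_nodup.
  intros q Hq. unfold weight in Hq. destruct (Nat.eqb _ _); [|lra].
  split; [apply hat_support_corners | apply H]; auto.
Qed.

Lemma cover_pos_label c s t i : 0 < cover c s t i ->
  exists x y, label c (x, y) = i /\ 0 < hat (s - IZR x) (t - IZR y).
Proof.
  intros H. apply lsum_pos_ex in H; [|apply weight_nonneg].
  destruct H as [[x y] [_ Hq]]. unfold weight in Hq.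
  destruct (Nat.eqb_spec (label c (x, y)) i); [exists x, y; auto | lra].
Qed.

Lemma weight_shift c s t i x y l1 l2 : in_lattice l1 l2 ->
  weight c (s + IZR l1) (t + IZR l2) i ((x + l1)%Z, (y + l2)%Z) = weight c s t i (x, y).
Proof.
  intros H. unfold weight; simpl. rewrite label_period, !plus_IZR by auto.
  replace (s + IZR l1 - (IZR x + IZR l1)) with (s - IZR x) by ring.
  replace (t + IZR l2 - (IZR y + IZR l2)) with (t - IZR y) by ring. auto.
Qed.

Lemma cover_period c s t l1 l2 : in_lattice l1 l2 ->
  cover c (s + IZR l1) (t + IZR l2) = cover c s t.
Proof.
  intros H. apply functional_extensionality. intros i.
  unfold cover, corners. rewrite !Int_part_shift. unfold lsum; simpl.
  replace (Int_part s + l1 + 1)%Z with ((Int_part s + 1) + l1)%Z by ring.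
  replace (Int_part t + l2 + 1)%Z with ((Int_part t + 1) + l2)%Z by ring.
  rewrite !weight_shift by auto. auto.
Qed.

Lemma hat_up_shift a b x y u w : 0 <= w -> w <= u -> u <= 1 ->
  hat (IZR a + u - IZR x) (IZR b + w - IZR y) = up_weight (x - a) (y - b) u w.
Proof. intros. rewrite <- hat_up_triangle by auto. rewrite !minus_IZR. f_equal; ring. Qed.

Lemma hat_down_shift a b x y u w : 0 <= u -> u <= w -> w <= 1 ->
  hat (IZR a + u - IZR x) (IZR b + w - IZR y) = down_weight (x - a) (y - b) u w.
Proof. intros. rewrite <- hat_down_triangle by auto. rewrite !minus_IZR. f_equal; ring. Qed.

Definition tri_vec (l0 l1 l2 : nat) (x0 x1 x2 : R) (i : nat) : R :=
  (if Nat.eqb l0 i then x0 else 0) + (if Nat.eqb l1 i then x1 else 0)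
  + (if Nat.eqb l2 i then x2 else 0).

Lemma rsum_tri_vec l0 l1 l2 x0 x1 x2 : (l0 < N)%nat -> (l1 < N)%nat -> (l2 < N)%nat ->
  rsum N (tri_vec l0 l1 l2 x0 x1 x2) = x0 + x1 + x2.
Proof. intros. unfold tri_vec. rewrite !rsum_plus, !rsum_indicator by auto. auto. Qed.

Lemma tri_vec_support l0 l1 l2 x0 x1 x2 i :
  tri_vec l0 l1 l2 x0 x1 x2 i <> 0 -> i = l0 \/ i = l1 \/ i = l2.
Proof.
  unfold tri_vec.
  destruct (Nat.eqb_spec l0 i), (Nat.eqb_spec l1 i), (Nat.eqb_spec l2 i); auto; lra.
Qed.

Lemma three_pts_nodup (a b a1 b1 a2 b2 : Z) : (a, b) <> (a1, b1) -> (a, b) <> (a2, b2) ->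
  (a1, b1) <> (a2, b2) -> NoDup [(a, b); (a1, b1); (a2, b2)].
Proof.
  intros. repeat constructor; simpl; intros H';
    repeat (destruct H' as [H'|H']; [congruence|]); auto.
Qed.

Ltac pt_eq := first [left; f_equal; lia | right; left; f_equal; lia
                    | right; right; left; f_equal; lia | lia].

Lemma cover_up_triangle c a b u w : 0 <= w -> w <= u -> u <= 1 ->
  cover c (IZR a + u) (IZR b + w) =
  tri_vec (label c (a, b)) (label c ((a + 1)%Z, b)) (label c ((a + 1)%Z, (b + 1)%Z))
    (1 - u) (u - w) w.
Proof.
  intros H1 H2 H3. apply functional_extensionality. intros i.
  rewrite (cover_as_lsum c _ _ [(a, b); ((a + 1)%Z, b); ((a + 1)%Z, (b + 1)%Z)]).
  - unfold lsum, tri_vec, weight; simpl. rewrite !hat_up_shift by auto. unfold up_weight.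
    rewrite Z.sub_diag, Z.add_simpl_l, Z.sub_diag, Z.add_simpl_l. simpl. lra.
  - apply three_pts_nodup; intro E; injection E; lia.
  - intros [x y] Hq. simpl in Hq. rewrite hat_up_shift in Hq by auto. unfold up_weight in Hq.
    destruct (Z.eqb_spec (x - a) 0), (Z.eqb_spec (y - b) 0), (Z.eqb_spec (x - a) 1),
      (Z.eqb_spec (y - b) 1); simpl in Hq; try lra; simpl; pt_eq.
Qed.

Lemma cover_down_triangle c a b u w : 0 <= u -> u <= w -> w <= 1 ->
  cover c (IZR a + u) (IZR b + w) =
  tri_vec (label c (a, b)) (label c (a, (b + 1)%Z)) (label c ((a + 1)%Z, (b + 1)%Z))
    (1 - w) (w - u) u.
Proof.
  intros H1 H2 H3. apply functional_extensionality. intros i.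
  rewrite (cover_as_lsum c _ _ [(a, b); (a, (b + 1)%Z); ((a + 1)%Z, (b + 1)%Z)]).
  - unfold lsum, tri_vec, weight; simpl. rewrite !hat_down_shift by auto. unfold down_weight.
    rewrite Z.sub_diag, Z.add_simpl_l, Z.sub_diag, Z.add_simpl_l. simpl. lra.
  - apply three_pts_nodup; intro E; injection E; lia.
  - intros [x y] Hq. simpl in Hq. rewrite hat_down_shift in Hq by auto. unfold down_weight in Hq.
    destruct (Z.eqb_spec (x - a) 0), (Z.eqb_spec (y - b) 0), (Z.eqb_spec (x - a) 1),
      (Z.eqb_spec (y - b) 1); simpl in Hq; try lra; simpl; pt_eq.
Qed.

Lemma plane_decomp s t :
  exists a b u w, s = IZR a + u /\ t = IZR b + w /\ 0 <= u < 1 /\ 0 <= w < 1.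
Proof.
  exists (Int_part s), (Int_part t), (s - IZR (Int_part s)), (t - IZR (Int_part t)).
  pose proof (Int_part_bounds s); pose proof (Int_part_bounds t). repeat split; lra.
Qed.

Lemma NoDup_list_prod {A B : Type} (l : list A) (l' : list B) :
  NoDup l -> NoDup l' -> NoDup (list_prod l l').
Proof.
  intros H1 H2. induction H1; simpl; [constructor|].
  apply NoDup_app; auto.
  - apply NoDup_map_NoDup_ForallPairs; auto. intros a b _ _ E. injection E; auto.
  - intros [a b] Ha Hb. apply in_map_iff in Ha. destruct Ha as [y [E _]].
    injection E; intros; subst. apply in_prod_iff in Hb. tauto.
Qed.

Definition window (a b : Z) : list pt :=
  list_prod [(a - 1)%Z; a; (a + 1)%Z; (a + 2)%Z] [(b - 1)%Z; b; (b + 1)%Z; (b + 2)%Z].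

Lemma window_nodup a b : NoDup (window a b).
Proof.
  apply NoDup_list_prod; repeat constructor; simpl; intros H;
    repeat (destruct H as [H|H]; [lia|]); auto.
Qed.

Lemma in_window a b x y : (a - 1 <= x <= a + 2)%Z -> (b - 1 <= y <= b + 2)%Z ->
  In (x, y) (window a b).
Proof.
  intros. apply in_prod_iff. simpl.
  split; [assert (x = a - 1 \/ x = a \/ x = a + 1 \/ x = a + 2)%Z by lia
         |assert (y = b - 1 \/ y = b \/ y = b + 1 \/ y = b + 2)%Z by lia]; intuition.
Qed.

Lemma lsum_window_le a b F c : (forall q, F q <= c) -> lsum (window a b) F <= 16 * c.
Proof.
  intros H. unfold window, lsum; simpl.
  repeat match goal with |- context [F ?q] =>
    lazymatch goal with _ : F q <= c |- _ => fail | _ => pose proof (H q) end end.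
  lra.
Qed.

Lemma cover_as_window c s t s' t' : Rabs (s - s') < 1 -> Rabs (t - t') < 1 ->
  forall i, cover c s' t' i = lsum (window (Int_part s) (Int_part t)) (weight c s' t' i).
Proof.
  intros Hs Ht. apply cover_as_lsum; [apply window_nodup|].
  intros [x y] Hq. simpl in Hq. pose proof (hat_nonneg (s' - IZR x) (t' - IZR y)).
  apply Rabs_def2 in Hs, Ht.
  destruct (hat_pos_bounds (s' - IZR x) (t' - IZR y) ltac:(lra)) as [Hx [Hy _]].
  pose proof (Int_part_bounds s). pose proof (Int_part_bounds t).
  apply in_window; split; apply Z_le_of_IZR_lt_succ;
    rewrite ?plus_IZR, ?minus_IZR; simpl; lra.
Qed.

Lemma cover_lipschitz c s t s' t' : Rabs (s - s') < 1 -> Rabs (t - t') < 1 ->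
  distN N (cover c s t) (cover c s' t') <= 32 * (Rabs (s - s') + Rabs (t - t')).
Proof.
  intros H1 H2. unfold distN.
  set (W := window (Int_part s) (Int_part t)).
  assert (R0 : forall r, Rabs (r - r) < 1) by (intros; rewrite Rminus_diag, Rabs_R0; lra).
  eapply Rle_trans.
  { apply rsum_le. intros i _.
    rewrite (cover_as_window c s t s t (R0 s) (R0 t) i), (cover_as_window c s t s' t' H1 H2 i).
    rewrite <- lsum_minus.
    apply lsum_abs_le. }
  rewrite rsum_lsum. fold W.
  eapply Rle_trans.
  { apply lsum_le. intros q _.
    rewrite (rsum_ext N _ (fun i => if Nat.eqb (label c q) i then
        Rabs (hat (s - IZR (fst q)) (t - IZR (snd q)) - hat (s' - IZR (fst q)) (t' - IZR (snd q)))
        else 0)).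
    - rewrite rsum_indicator by apply label_lt. apply Rle_refl.
    - intros i _. unfold weight. destruct (Nat.eqb _ _); auto.
      rewrite Rminus_0_r, Rabs_R0. auto. }
  replace (32 * (Rabs (s - s') + Rabs (t - t')))
    with (16 * (2 * (Rabs (s - s') + Rabs (t - t')))) by ring.
  apply lsum_window_le. intros q. eapply Rle_trans; [apply hat_lipschitz|].
  replace (s - IZR (fst q) - (s' - IZR (fst q))) with (s - s') by ring.
  replace (t - IZR (snd q) - (t' - IZR (snd q))) with (t - t') by ring. lra.
Qed.

Hypothesis n1_lt : (n1 < N)%nat.
Hypothesis n2_lt : (n2 < N)%nat.

Lemma cover_in_realization n3 c s t : realization N n1 n2 n3 (cover c s t).
Proof.
  split; [apply cover_out | split; [apply cover_nonneg |]].
  destruct (plane_decomp s t) as [a [b [u [w [-> [-> [Hu Hw]]]]]]].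
  pose proof (label_lt c) as LL.
  destruct (Rle_dec w u).
  - rewrite cover_up_triangle by lra. rewrite rsum_tri_vec by auto. split; [lra|].
    exists (fun i => i = label c (a, b) \/ i = label c ((a + 1)%Z, b)
                    \/ i = label c ((a + 1)%Z, (b + 1)%Z)).
    split; [left; exists (label c (a, b)); split; [auto | left]|].
    + intros i. rewrite (label_offset c a b (a + 1) b n1),
        (label_offset c a b (a + 1) (b + 1) (n1 + n2)) by (exists 0%Z; lia).
      rewrite Nat.add_assoc. reflexivity.
    + intros i Hi. exact (tri_vec_support _ _ _ _ _ _ _ Hi).
  - rewrite cover_down_triangle by lra. rewrite rsum_tri_vec by auto. split; [lra|].
    exists (fun i => i = label c ((a + 1)%Z, (b + 1)%Z) \/ i = label c (a, (b + 1)%Z)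
                    \/ i = label c (a, b)).
    split; [left; exists (label c ((a + 1)%Z, (b + 1)%Z)); split; [auto | right]|].
    + intros i. rewrite (label_offset c (a + 1) (b + 1) a (b + 1) (N - n1)) by (exists 1%Z; lia).
      rewrite (label_offset c (a + 1) (b + 1) a b (N - n1 + (N - n2))) by (exists 2%Z; lia).
      rewrite Nat.add_assoc. reflexivity.
    + intros i Hi. apply tri_vec_support in Hi. tauto.
Qed.

End Cover.

Lemma int_dist_le_1 (a b : Z) (x : R) : -1 < x - IZR a < 1 -> -1 < x - IZR b < 1 ->
  (Z.abs (a - b) <= 1)%Z.
Proof.
  intros. assert (a <= b + 1 /\ b <= a + 1)%Z as [] by
    (split; apply Z_le_of_IZR_lt_succ; rewrite plus_IZR; simpl; lra).
  lia.
Qed.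

Lemma star_neighbours s t x y x' y' :
  0 < hat (s - IZR x) (t - IZR y) -> 0 < hat (s - IZR x') (t - IZR y') ->
  (Z.abs (x - x') <= 1)%Z /\ (Z.abs (y - y') <= 1)%Z /\ (Z.abs ((x - y) - (x' - y')) <= 1)%Z.
Proof.
  intros H H'. apply hat_pos_bounds in H, H'.
  split; [|split]; [apply (int_dist_le_1 _ _ s) | apply (int_dist_le_1 _ _ t)
                   | apply (int_dist_le_1 _ _ (s - t))]; rewrite ?minus_IZR; lra.
Qed.

(* The only use of [2 n3 <> N]: otherwise [e1 = e2 = 2] is a solution. *)
Lemma short_relation_trivial (A B C e1 e2 k : Z) : (1 <= A)%Z -> (A < B)%Z -> (B < C)%Z ->
  (2 * C <> A + B + C)%Z ->
  (Z.abs e1 <= 2)%Z -> (Z.abs e2 <= 2)%Z -> (Z.abs (e1 - e2) <= 2)%Z ->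
  (e1 * A + e2 * B = k * (A + B + C))%Z -> e1 = 0%Z /\ e2 = 0%Z.
Proof.
  intros. assert (k = -1 \/ k = 0 \/ k = 1)%Z as Hk by nia.
  assert (e1 = -2 \/ e1 = -1 \/ e1 = 0 \/ e1 = 1 \/ e1 = 2)%Z as He1 by lia.
  assert (e2 = -2 \/ e2 = -1 \/ e2 = 0 \/ e2 = 1 \/ e2 = 2)%Z as He2 by lia.
  destruct Hk as [?|[?|?]]; destruct He1 as [?|[?|[?|[?|?]]]];
    destruct He2 as [?|[?|[?|[?|?]]]]; subst; lia.
Qed.

Lemma tri_vec_of_support x l0 l1 l2 : l0 <> l1 -> l0 <> l2 -> l1 <> l2 ->
  (forall i, x i <> 0 -> i = l0 \/ i = l1 \/ i = l2) ->
  x = tri_vec l0 l1 l2 (x l0) (x l1) (x l2).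
Proof.
  intros D01 D02 D12 Hx. apply functional_extensionality. intros i. unfold tri_vec.
  destruct (Nat.eqb_spec l0 i), (Nat.eqb_spec l1 i), (Nat.eqb_spec l2 i);
    subst; try lia; try lra.
  destruct (Req_EM_T (x i) 0) as [E|E]; [lra|]. destruct (Hx i E) as [?|[?|?]]; lia.
Qed.

Lemma Z_of_nat_gcd_bezout n m : (0 < n)%nat ->
  exists x y : Z, Z.of_nat (Nat.gcd n m) = (x * Z.of_nat n + y * Z.of_nat m)%Z.
Proof.
  intros Hn. destruct (Nat.gcd_bezout_pos n m Hn) as [a [b E]].
  apply (f_equal Z.of_nat) in E. rewrite Nat2Z.inj_add, !Nat2Z.inj_mul in E.
  exists (Z.of_nat a), (- Z.of_nat b)%Z. rewrite Z.mul_opp_l. lia.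
Qed.

Lemma Nat_divide_Z a b : Nat.divide a b -> (Z.of_nat a | Z.of_nat b)%Z.
Proof. intros [k Hk]. exists (Z.of_nat k). lia. Qed.

Lemma gcd_pos_l n m : (0 < n)%nat -> (0 < Nat.gcd n m)%nat.
Proof. intros Hn. apply Nat.neq_0_lt_0. intros E. apply Nat.gcd_eq_0_l in E. lia. Qed.

Section Gcd3.
Variables N n1 n2 n3 : nat.
Hypothesis n1_pos : (1 <= n1)%nat.
Hypothesis N_sum : (n1 + n2 + n3 = N)%nat.

Notation g := (Nat.gcd n1 (Nat.gcd n2 n3)).

Lemma gcd3_divides : (Z.of_nat g | Z.of_nat n1)%Z /\ (Z.of_nat g | Z.of_nat n2)%Z /\
  (Z.of_nat g | Z.of_nat N)%Z.
Proof.
  assert (g1 : Nat.divide g n1) by apply Nat.gcd_divide_l.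
  assert (g23 : Nat.divide g (Nat.gcd n2 n3)) by apply Nat.gcd_divide_r.
  assert (g2 : Nat.divide g n2) by exact (Nat.divide_trans _ _ _ g23 (Nat.gcd_divide_l _ _)).
  assert (g3 : Nat.divide g n3) by exact (Nat.divide_trans _ _ _ g23 (Nat.gcd_divide_r _ _)).
  repeat split; apply Nat_divide_Z; auto.
  rewrite <- N_sum. repeat apply Nat.divide_add_r; auto.
Qed.

Lemma gcd3_bezout : exists x y w : Z,
  (x * Z.of_nat n1 + y * Z.of_nat n2 + w * Z.of_nat N = Z.of_nat g)%Z.
Proof.
  destruct (Z_of_nat_gcd_bezout n1 (Nat.gcd n2 n3) ltac:(lia)) as [x1 [y1 E1]].
  destruct (Nat.eq_dec n2 0) as [Z2|NZ2].
  - rewrite Z2, Nat.gcd_0_l in E1. exists (x1 - y1)%Z, 0%Z, y1.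
    rewrite Z2, Nat.gcd_0_l, E1, <- N_sum, Z2, !Nat2Z.inj_add. ring.
  - destruct (Z_of_nat_gcd_bezout n2 n3 ltac:(lia)) as [x2 [y2 E2]].
    exists (x1 - y1 * y2)%Z, (y1 * x2 - y1 * y2)%Z, (y1 * y2)%Z.
    rewrite E1, E2. rewrite <- N_sum, !Nat2Z.inj_add. ring.
Qed.

End Gcd3.

Section Structure.
Variables N n1 n2 n3 : nat.
Hypothesis n1_pos : (1 <= n1)%nat.
Hypothesis n12 : (n1 < n2)%nat.
Hypothesis n23 : (n2 < n3)%nat.
Hypothesis N_sum : (n1 + n2 + n3 = N)%nat.
Hypothesis n3_not_half : (2 * n3 <> N)%nat.

Let N_pos : (0 < N)%nat. Proof. lia. Qed.

Notation g := (Nat.gcd n1 (Nat.gcd n2 n3)).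
Notation in_lattice := (lattice (Z.of_nat n1) (Z.of_nat n2) (Z.of_nat N)).
Notation labelZ := (labelZ N n1 n2).
Notation label := (label N n1 n2).
Notation cover := (cover N n1 n2).

Lemma label_inj_near c q q' : label c q = label c q' ->
  (Z.abs (fst q - fst q') <= 2)%Z -> (Z.abs (snd q - snd q') <= 2)%Z ->
  (Z.abs ((fst q - snd q) - (fst q' - snd q')) <= 2)%Z -> q = q'.
Proof.
  intros H ? ? ?.
  assert (E : labelZ c q = labelZ c q') by (rewrite <- !label_Z by exact N_pos; congruence).
  apply labelZ_eq_lattice in E; [|exact N_pos]. destruct E as [k Hk].
  destruct (short_relation_trivial (Z.of_nat n1) (Z.of_nat n2) (Z.of_nat n3)
    (fst q - fst q') (snd q - snd q') k) as [E1 E2]; try lia.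
  destruct q, q'; simpl in *. f_equal; lia.
Qed.

Lemma cover_at_star c s t x y x' y' : 0 < hat (s - IZR x) (t - IZR y) ->
  (Z.abs (x' - x) <= 1)%Z -> (Z.abs (y' - y) <= 1)%Z ->
  (Z.abs ((x' - y') - (x - y)) <= 1)%Z ->
  cover c s t (label c (x', y')) = hat (s - IZR x') (t - IZR y').
Proof.
  intros Hp ? ? ?.
  transitivity (lsum [(x', y')] (weight N n1 n2 c s t (label c (x', y')))).
  - apply lsum_eq_on_support; [apply corners_nodup | repeat constructor; auto |].
    intros q Hq. unfold weight in Hq.
    destruct (Nat.eqb_spec (label c q) (label c (x', y'))) as [E|E]; [|lra].
    split; [apply hat_support_corners; auto | left; symmetry].
    assert (Hq' : 0 < hat (s - IZR (fst q)) (t - IZR (snd q)))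
      by (pose proof (hat_nonneg (s - IZR (fst q)) (t - IZR (snd q))); lra).
    destruct (star_neighbours s t _ _ _ _ Hp Hq') as [? [? ?]].
    apply (label_inj_near c) in E; auto; simpl; lia.
  - unfold lsum, weight; simpl. rewrite Nat.eqb_refl. lra.
Qed.

Definition star_s (X : nat -> R) (c : nat) (x y : Z) : R :=
  X (label c ((x + 1)%Z, y)) - X (label c ((x - 1)%Z, y))
  + X (label c ((x + 1)%Z, (y + 1)%Z)) - X (label c ((x - 1)%Z, (y - 1)%Z)).

Definition star_t (X : nat -> R) (c : nat) (x y : Z) : R :=
  X (label c (x, (y + 1)%Z)) - X (label c (x, (y - 1)%Z))
  + X (label c ((x + 1)%Z, (y + 1)%Z)) - X (label c ((x - 1)%Z, (y - 1)%Z)).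

Lemma cover_star_coords c s t x y : 0 < hat (s - IZR x) (t - IZR y) ->
  s - IZR x = star_s (cover c s t) c x y /\ t - IZR y = star_t (cover c s t) c x y.
Proof.
  intros Hp. unfold star_s, star_t.
  rewrite !(cover_at_star c s t x y) by (auto; lia).
  rewrite !plus_IZR, !minus_IZR.
  replace (s - (IZR x + 1)) with (s - IZR x - 1) by ring.
  replace (s - (IZR x - 1)) with (s - IZR x + 1) by ring.
  replace (t - (IZR y + 1)) with (t - IZR y - 1) by ring.
  replace (t - (IZR y - 1)) with (t - IZR y + 1) by ring.
  exact (hat_star_identity _ _ Hp).
Qed.

Lemma label_translate c x y x' y' a b a' b' : labelZ c (x', y') = labelZ c (x, y) ->
  (a' - x' = a - x)%Z -> (b' - y' = b - y)%Z -> label c (a', b') = label c (a, b).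
Proof.
  intros E Ha Hb. apply label_eq_of_labelZ.
  replace (a', b') with ((x' + (a - x))%Z, (y' + (b - y))%Z) by (f_equal; lia).
  replace (a, b) with ((x + (a - x))%Z, (y + (b - y))%Z) by (f_equal; lia).
  rewrite !labelZ_shift, E by exact N_pos. auto.
Qed.

Lemma star_translate X c x y x' y' : labelZ c (x', y') = labelZ c (x, y) ->
  star_s X c x' y' = star_s X c x y /\ star_t X c x' y' = star_t X c x y.
Proof.
  intros E. unfold star_s, star_t.
  split; repeat (lazymatch goal with |- label _ _ = label _ _ => fail | _ => f_equal end);
    apply (label_translate c x y x' y'); auto; lia.
Qed.

Lemma star_close X Y c x y :
  Rabs (star_s X c x y - star_s Y c x y) <= 4 * distN N X Y /\
  Rabs (star_t X c x y - star_t Y c x y) <= 4 * distN N X Y.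
Proof.
  assert (D : forall q, Rabs (X (label c q) - Y (label c q)) <= distN N X Y)
    by (intros; apply distN_term_le, label_lt, N_pos).
  unfold star_s, star_t.
  split; [ pose proof (D ((x + 1)%Z, y)); pose proof (D ((x - 1)%Z, y))
         | pose proof (D (x, (y + 1)%Z)); pose proof (D (x, (y - 1)%Z)) ];
  pose proof (D ((x + 1)%Z, (y + 1)%Z)); pose proof (D ((x - 1)%Z, (y - 1)%Z));
  repeat match goal with H : Rabs _ <= _ |- _ => apply Rabs_le_inv in H end;
  apply Rabs_le; lra.
Qed.

Lemma exists_star_vertex s t : exists x y, 0 < hat (s - IZR x) (t - IZR y).
Proof.
  destruct (cover_in_realization N n1 n2 N_pos ltac:(lia) ltac:(lia) n3 0 s t)
    as [_ [_ [Hs _]]].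
  destruct (rsum_pos_ex N (cover 0 s t)) as [i [_ Hi]]; [lra|].
  destruct (cover_pos_label N n1 n2 0 s t i Hi) as [x [y [_ H]]]. eauto.
Qed.

Lemma labelZ_mod_gcd c q : (c < g)%nat -> (labelZ c q mod Z.of_nat g = Z.of_nat c)%Z.
Proof.
  intros Hc. destruct (gcd3_divides N n1 n2 n3 N_sum) as [[k1 Hk1] [[k2 Hk2] HN]].
  rewrite labelZ_def, Z.mod_mod_divide, Hk1, Hk2 by auto.
  replace (Z.of_nat c + fst q * (k1 * Z.of_nat g) + snd q * (k2 * Z.of_nat g))%Z
    with (Z.of_nat c + (fst q * k1 + snd q * k2) * Z.of_nat g)%Z by ring.
  rewrite Z.mod_add by lia. apply Z.mod_small. lia.
Qed.

(* The vertex [(x, y)] keeps a positive coordinate at the second point, so both points lie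
   in stars of vertices with the same label, and [cover_star_coords] reads both parameters
   off the same six coordinates. *)
Lemma cover_recover c c' s t s' t' x y : (c < g)%nat -> (c' < g)%nat ->
  0 < hat (s - IZR x) (t - IZR y) ->
  distN N (cover c s t) (cover c' s' t') < hat (s - IZR x) (t - IZR y) ->
  c' = c /\ exists l1 l2, in_lattice l1 l2 /\
    Rabs (s + IZR l1 - s') <= 4 * distN N (cover c s t) (cover c' s' t') /\
    Rabs (t + IZR l2 - t') <= 4 * distN N (cover c s t) (cover c' s' t').
Proof.
  intros Hc Hc' Hxy Hd.
  set (i0 := label c (x, y)).
  assert (Hi0 : 0 < cover c' s' t' i0).
  { pose proof (distN_term_le N (cover c s t) (cover c' s' t') i0 (label_lt N n1 n2 N_pos _ _)).
    apply Rabs_le_inv in H. unfold i0 in *.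
    rewrite (cover_at_star c s t x y x y) in H by (auto; lia). lra. }
  destruct (cover_pos_label N n1 n2 c' s' t' _ Hi0) as [x' [y' [El Hxy']]].
  assert (EZ : labelZ c' (x', y') = labelZ c (x, y))
    by (rewrite <- !label_Z by exact N_pos; unfold i0 in El; congruence).
  assert (Ec : c' = c).
  { pose proof (labelZ_mod_gcd c (x, y) Hc). pose proof (labelZ_mod_gcd c' (x', y') Hc').
    rewrite EZ in *. lia. }
  subst c'. split; [auto|].
  exists (x' - x)%Z, (y' - y)%Z.
  split; [exact (labelZ_eq_lattice N n1 n2 N_pos c _ _ EZ)|].
  destruct (cover_star_coords c s t x y Hxy) as [S1 S2].
  destruct (cover_star_coords c s' t' x' y' Hxy') as [S1' S2'].
  destruct (star_translate (cover c s' t') c x y x' y' EZ) as [T1 T2].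
  destruct (star_close (cover c s t) (cover c s' t') c x y) as [B1 B2].
  rewrite !minus_IZR. split.
  - replace (s + (IZR x' - IZR x) - s') with ((s - IZR x) - (s' - IZR x')) by ring. congruence.
  - replace (t + (IZR y' - IZR y) - t') with ((t - IZR y) - (t' - IZR y')) by ring. congruence.
Qed.

Lemma cover_injective_mod_lattice c c' s t s' t' : (c < g)%nat -> (c' < g)%nat ->
  cover c s t = cover c' s' t' ->
  c' = c /\ exists l1 l2, in_lattice l1 l2 /\ s' = s + IZR l1 /\ t' = t + IZR l2.
Proof.
  intros Hc Hc' E. destruct (exists_star_vertex s t) as [x [y Hxy]].
  assert (D0 : distN N (cover c s t) (cover c' s' t') = 0).
  { rewrite E. unfold distN. rewrite (rsum_ext _ _ (fun _ => 0)), rsum_const0; auto.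
    intros. rewrite Rminus_diag, Rabs_R0. auto. }
  destruct (cover_recover c c' s t s' t' x y Hc Hc' Hxy) as [Ec [l1 [l2 [Hl [B1 B2]]]]];
    [lra|].
  split; [auto|]. exists l1, l2. rewrite D0 in B1, B2.
  pose proof (Rabs_pos (s + IZR l1 - s')). pose proof (Rabs_pos (t + IZR l2 - t')).
  split; [auto|]. split; [apply Rabs_le_inv in B1 | apply Rabs_le_inv in B2]; lra.
Qed.

Lemma label_reach k : (k < N)%nat -> exists c a b, (c < g)%nat /\ label c (a, b) = k.
Proof.
  intros Hk. destruct (gcd3_bezout N n1 n2 n3 n1_pos N_sum) as [x [y [w Hb]]].
  pose proof (gcd_pos_l n1 (Nat.gcd n2 n3) ltac:(lia)).
  set (G := Z.of_nat g) in *. set (kz := Z.of_nat k).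
  assert (Ek : kz = (G * (kz / G) + kz mod G)%Z) by (apply Z.div_mod; lia).
  assert (Hr : (0 <= kz mod G < G)%Z) by (apply Z.mod_pos_bound; lia).
  exists (Z.to_nat (kz mod G)), ((kz / G) * x)%Z, ((kz / G) * y)%Z. split; [lia|].
  apply Nat2Z.inj. rewrite label_Z, labelZ_def by exact N_pos. simpl. rewrite Z2Nat.id by lia.
  replace (kz mod G + kz / G * x * Z.of_nat n1 + kz / G * y * Z.of_nat n2)%Z
    with (kz + (- (kz / G) * w) * Z.of_nat N)%Z by (rewrite Ek at 1; rewrite <- Hb; ring).
  rewrite Z.mod_add by lia. apply Z.mod_small. lia.
Qed.

Lemma point_on_triangle x l0 l1 l2 : (forall i, 0 <= x i) -> rsum N x = 1 ->
  (l0 < N)%nat -> (l1 < N)%nat -> (l2 < N)%nat -> l0 <> l1 -> l0 <> l2 -> l1 <> l2 ->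
  (forall i, x i <> 0 -> i = l0 \/ i = l1 \/ i = l2) ->
  x = tri_vec l0 l1 l2 (x l0) (x l1) (x l2) /\ x l0 + x l1 + x l2 = 1.
Proof.
  intros Hn Hs ? ? ? ? ? ? Hx.
  assert (Ex : x = tri_vec l0 l1 l2 (x l0) (x l1) (x l2)) by (apply tri_vec_of_support; auto).
  split; [exact Ex|].
  transitivity (rsum N (tri_vec l0 l1 l2 (x l0) (x l1) (x l2))).
  - rewrite rsum_tri_vec; auto.
  - rewrite <- Ex. exact Hs.
Qed.

Ltac distinct_labels :=
  let E := fresh in intros E; apply label_inj_near in E; simpl; try lia; injection E; lia.

Lemma cover_onto_up_triangle x c a b : (forall i, 0 <= x i) -> rsum N x = 1 ->
  (forall i, x i <> 0 ->
     i = label c (a, b) \/ i = label c ((a + 1)%Z, b) \/ i = label c ((a + 1)%Z, (b + 1)%Z)) ->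
  exists s t, cover c s t = x.
Proof.
  intros Hn Hs Hsupp.
  set (l0 := label c (a, b)) in *. set (l1 := label c ((a + 1)%Z, b)) in *.
  set (l2 := label c ((a + 1)%Z, (b + 1)%Z)) in *.
  assert (l0 <> l1) by distinct_labels. assert (l0 <> l2) by distinct_labels.
  assert (l1 <> l2) by distinct_labels.
  pose proof (label_lt N n1 n2 N_pos c) as LL.
  destruct (point_on_triangle x l0 l1 l2) as [Ex Sx]; try apply LL; auto.
  exists (IZR a + (x l1 + x l2)), (IZR b + x l2).
  pose proof (Hn l0). pose proof (Hn l1). pose proof (Hn l2).
  rewrite cover_up_triangle by (auto; lra). fold l0 l1 l2.
  transitivity (tri_vec l0 l1 l2 (x l0) (x l1) (x l2)); [f_equal; lra | auto].
Qed.

Lemma cover_onto_down_triangle x c a b : (forall i, 0 <= x i) -> rsum N x = 1 ->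
  (forall i, x i <> 0 ->
     i = label c (a, b) \/ i = label c (a, (b + 1)%Z) \/ i = label c ((a + 1)%Z, (b + 1)%Z)) ->
  exists s t, cover c s t = x.
Proof.
  intros Hn Hs Hsupp.
  set (l0 := label c (a, b)) in *. set (l1 := label c (a, (b + 1)%Z)) in *.
  set (l2 := label c ((a + 1)%Z, (b + 1)%Z)) in *.
  assert (l0 <> l1) by distinct_labels. assert (l0 <> l2) by distinct_labels.
  assert (l1 <> l2) by distinct_labels.
  pose proof (label_lt N n1 n2 N_pos c) as LL.
  destruct (point_on_triangle x l0 l1 l2) as [Ex Sx]; try apply LL; auto.
  exists (IZR a + x l2), (IZR b + (x l1 + x l2)).
  pose proof (Hn l0). pose proof (Hn l1). pose proof (Hn l2).
  rewrite cover_down_triangle by (auto; lra). fold l0 l1 l2.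
  transitivity (tri_vec l0 l1 l2 (x l0) (x l1) (x l2)); [f_equal; lra | auto].
Qed.

Lemma cover_surjective x : realization N n1 n2 n3 x ->
  exists c s t, (c < g)%nat /\ cover c s t = x.
Proof.
  intros [_ [Hn [Hs [v [Hsimp Hsupp]]]]].
  destruct Hsimp as [[k [Hk [Hv|Hv]]] | [[k [Hk [m [Hm Hv]]]] | [k [Hk Hv]]]];
    destruct (label_reach k Hk) as [c [a [b [Hc El]]]];
    cut (exists s t, cover c s t = x); try (intros [s [t E]]; exists c, s, t; auto);
    subst k.
  - apply (cover_onto_up_triangle x c a b Hn Hs).
    intros i Hi. apply Hsupp, Hv in Hi.
    rewrite (label_offset N n1 n2 N_pos c a b (a + 1) b n1),
      (label_offset N n1 n2 N_pos c a b (a + 1) (b + 1) (n1 + n2)) by (exists 0%Z; lia).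
    rewrite Nat.add_assoc. exact Hi.
  - apply (cover_onto_down_triangle x c (a - 1) (b - 1) Hn Hs).
    intros i Hi. apply Hsupp, Hv in Hi. rewrite !Z.sub_add.
    rewrite (label_offset N n1 n2 N_pos c a b (a - 1) b (N - n1)) by (exists 1%Z; lia).
    rewrite (label_offset N n1 n2 N_pos c a b (a - 1) (b - 1) (N - n1 + (N - n2)))
      by (exists 2%Z; lia).
    rewrite Nat.add_assoc. tauto.
  - destruct Hm as [-> | [-> | ->]].
    + apply (cover_onto_up_triangle x c a b Hn Hs).
      intros i Hi. apply Hsupp, Hv in Hi.
      rewrite (label_offset N n1 n2 N_pos c a b (a + 1) b n1) by (exists 0%Z; lia). tauto.
    + apply (cover_onto_down_triangle x c a b Hn Hs).
      intros i Hi. apply Hsupp, Hv in Hi.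
      rewrite (label_offset N n1 n2 N_pos c a b a (b + 1) n2) by (exists 0%Z; lia). tauto.
    + apply (cover_onto_up_triangle x c (a - 1) (b - 1) Hn Hs).
      intros i Hi. apply Hsupp, Hv in Hi. rewrite !Z.sub_add.
      rewrite (label_offset N n1 n2 N_pos c a b (a - 1) (b - 1) n3) by (exists 1%Z; lia).
      tauto.
  - apply (cover_onto_up_triangle x c a b Hn Hs).
    intros i Hi. apply Hsupp, Hv in Hi. tauto.
Qed.

End Structure.

Definition angle (a b : R) : R := if Rle_dec 0 b then acos a else - acos a.

Lemma cos_angle a b : a * a + b * b = 1 -> cos (angle a b) = a.
Proof.
  intros H. assert (-1 <= a <= 1) by nra. unfold angle.
  destruct (Rle_dec 0 b); [|rewrite cos_neg]; apply cos_acos; auto.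
Qed.

Lemma sin_angle a b : a * a + b * b = 1 -> sin (angle a b) = b.
Proof.
  intros H. assert (-1 <= a <= 1) by nra.
  assert (E : sqrt (1 - a²) = Rabs b).
  { rewrite <- sqrt_Rsqr_abs. f_equal. unfold Rsqr. lra. }
  unfold angle. destruct (Rle_dec 0 b).
  - rewrite sin_acos, E by auto. apply Rabs_right. lra.
  - rewrite sin_neg, sin_acos, E by auto. rewrite Rabs_left by lra. ring.
Qed.

Lemma cos_sin_period_Z x m :
  cos (x + 2 * PI * IZR m) = cos x /\ sin (x + 2 * PI * IZR m) = sin x.
Proof.
  destruct (Z_le_gt_dec 0 m).
  - rewrite <- (Z2Nat.id m), <- INR_IZR_INZ by auto.
    replace (x + 2 * PI * INR (Z.to_nat m)) with (x + 2 * INR (Z.to_nat m) * PI) by ring.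
    split; [apply cos_period | apply sin_period].
  - replace m with (- Z.of_nat (Z.to_nat (- m)))%Z by lia.
    rewrite opp_IZR, <- INR_IZR_INZ. set (k := Z.to_nat (- m)).
    rewrite <- (cos_period (x + 2 * PI * - INR k) k), <- (sin_period (x + 2 * PI * - INR k) k).
    split; f_equal; ring.
Qed.

Lemma angle_reduce g : exists m : Z, - PI <= g - 2 * PI * IZR m <= PI.
Proof.
  pose proof PI_RGT_0. set (y := (g + PI) / (2 * PI)). exists (Int_part y).
  pose proof (Int_part_bounds y) as [Hlo Hhi].
  assert (g = y * (2 * PI) - PI) by (unfold y; field; lra).
  assert (IZR (Int_part y) * (2 * PI) <= y * (2 * PI)) by (apply Rmult_le_compat_r; lra).
  assert (y * (2 * PI) < (IZR (Int_part y) + 1) * (2 * PI)) by (apply Rmult_lt_compat_r; lra).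
  split; nra.
Qed.

Lemma sin_ge_third x : 0 <= x -> x <= 2 -> x / 3 <= sin x.
Proof.
  intros. destruct (pre_sin_bound x 0 ltac:(lra) ltac:(lra)) as [H1 _].
  simpl in H1. unfold sin_approx, sin_term in H1. simpl in H1. nra.
Qed.

Lemma Rsqr_abs_eq z : z * z = Rabs z * Rabs z.
Proof. destruct (Rcase_abs z); [rewrite Rabs_left | rewrite Rabs_right]; auto; ring. Qed.

Lemma angle_diff_bound al be : exists m : Z,
  (al - be - 2 * PI * IZR m) * (al - be - 2 * PI * IZR m) <=
  9 * ((cos al - cos be) * (cos al - cos be) + (sin al - sin be) * (sin al - sin be)).
Proof.
  destruct (angle_reduce (al - be)) as [m Hm]. exists m.
  set (g := al - be - 2 * PI * IZR m).
  assert (Ec : cos g = cos (al - be)).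
  { unfold g. replace (al - be - 2 * PI * IZR m) with (al - be + 2 * PI * IZR (- m))
      by (rewrite opp_IZR; ring).
    apply cos_sin_period_Z. }
  assert (Hg : - PI <= g <= PI) by (unfold g; lra). clearbody g.
  rewrite cos_minus in Ec.
  pose proof (sin2_cos2 al). pose proof (sin2_cos2 be). unfold Rsqr in *.
  assert (E2 : cos g = 1 - 2 * sin (g / 2) * sin (g / 2))
    by (rewrite <- cos_2a_sin; f_equal; field).
  pose proof PI2_1. pose proof PI_4.
  assert (Hs : Rabs g / 6 <= Rabs (sin (g / 2))).
  { destruct (Rle_dec 0 g).
    - pose proof (sin_ge_third (g / 2) ltac:(lra) ltac:(lra)).
      rewrite !Rabs_right by lra. lra.
    - pose proof (sin_ge_third (- (g / 2)) ltac:(lra) ltac:(lra)). rewrite sin_neg in *.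
      rewrite !Rabs_left by lra. lra. }
  assert (Rabs g / 6 * (Rabs g / 6) <= Rabs (sin (g / 2)) * Rabs (sin (g / 2))).
  { pose proof (Rabs_pos g). apply Rmult_le_compat; lra. }
  pose proof (Rsqr_abs_eq g). pose proof (Rsqr_abs_eq (sin (g / 2))). nra.
Qed.

Lemma Rabs_sin_le x : Rabs (sin x) <= Rabs x.
Proof.
  assert (H : forall y, 0 <= y -> Rabs (sin y) <= y).
  { intros y Hy. pose proof (SIN_bound y). destruct (Req_dec y 0) as [->|].
    - rewrite sin_0, Rabs_R0. lra.
    - pose proof (sin_lt_x y ltac:(lra)).
      destruct (Rle_dec y PI).
      + rewrite Rabs_right by (apply Rle_ge, sin_ge_0; lra). lra.
      + pose proof PI2_1. apply Rabs_le. lra. }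
  destruct (Rle_dec 0 x).
  - rewrite (Rabs_right x) by lra. auto.
  - rewrite (Rabs_left x) by lra.
    replace (sin x) with (- sin (- x)) by (rewrite sin_neg; ring).
    rewrite Rabs_Ropp. apply H. lra.
Qed.

Lemma cos_sin_lipschitz a b :
  Rabs (cos a - cos b) <= Rabs (a - b) /\ Rabs (sin a - sin b) <= Rabs (a - b).
Proof.
  rewrite form2, form4, !Rabs_mult. pose proof (Rabs_sin_le ((a - b) / 2)) as H.
  replace (Rabs ((a - b) / 2)) with (Rabs (a - b) / 2) in H
    by (unfold Rdiv; rewrite Rabs_mult, (Rabs_right (/ 2)) by lra; auto).
  pose proof (SIN_bound ((a + b) / 2)). pose proof (COS_bound ((a + b) / 2)).
  assert (Rabs (sin ((a + b) / 2)) <= 1) by (apply Rabs_le; lra).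
  assert (Rabs (cos ((a + b) / 2)) <= 1) by (apply Rabs_le; lra).
  rewrite (Rabs_left (-2)), (Rabs_right 2) by lra.
  pose proof (Rabs_pos (sin ((a - b) / 2))). pose proof (Rabs_pos (sin ((a + b) / 2))).
  pose proof (Rabs_pos (cos ((a + b) / 2))). split; nra.
Qed.

Lemma angle_close a b a' b' d : a * a + b * b = 1 -> a' * a' + b' * b' = 1 ->
  Rabs (a - a') + Rabs (b - b') < d ->
  exists m : Z, Rabs (angle a' b' / (2 * PI) - angle a b / (2 * PI) - IZR m) < d.
Proof.
  intros H1 H2 H3. destruct (angle_diff_bound (angle a' b') (angle a b)) as [m Hm]. exists m.
  rewrite !cos_angle, !sin_angle in Hm by auto.
  pose proof PI2_1. pose proof (Rabs_pos (a - a')). pose proof (Rabs_pos (b - b')).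
  set (z := angle a' b' - angle a b - 2 * PI * IZR m) in *.
  replace (angle a' b' / (2 * PI) - angle a b / (2 * PI) - IZR m) with (z / (2 * PI))
    by (unfold z; field; lra).
  unfold Rdiv. rewrite Rabs_mult, (Rabs_right (/ (2 * PI)))
    by (apply Rle_ge; left; apply Rinv_0_lt_compat; lra).
  assert (Q : (a' - a) * (a' - a) + (b' - b) * (b' - b)
              <= (Rabs (a - a') + Rabs (b - b')) * (Rabs (a - a') + Rabs (b - b'))).
  { rewrite (Rsqr_abs_eq (a' - a)), (Rsqr_abs_eq (b' - b)), (Rabs_minus_sym a'),
      (Rabs_minus_sym b'). nra. }
  assert (Hz : Rabs z < 3 * d).
  { pose proof (Rsqr_abs_eq z). pose proof (Rabs_pos z). nra. }
  assert (0 < / (2 * PI)) by (apply Rinv_0_lt_compat; lra).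
  assert (/ (2 * PI) * (2 * PI) = 1) by (field; lra).
  pose proof (Rabs_pos z). nra.
Qed.

Lemma angle_cos_sin phi : exists m : Z, angle (cos phi) (sin phi) = phi + 2 * PI * IZR m.
Proof.
  assert (Hc : cos phi * cos phi + sin phi * sin phi = 1)
    by (pose proof (sin2_cos2 phi); unfold Rsqr in *; lra).
  destruct (angle_diff_bound (angle (cos phi) (sin phi)) phi) as [m Hm].
  rewrite cos_angle, sin_angle in Hm by auto.
  exists m. nra.
Qed.

Lemma gcd_cofactors (a b : Z) : Z.gcd a b <> 0%Z ->
  a = (Z.gcd a b * (a / Z.gcd a b))%Z /\ b = (Z.gcd a b * (b / Z.gcd a b))%Z /\
  Z.gcd (a / Z.gcd a b) (b / Z.gcd a b) = 1%Z.
Proof.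
  intros H. pose proof (Z.gcd_nonneg a b).
  split; [|split]; [apply Zdivide_Zdiv_eq; [lia | apply Z.gcd_divide_l]
                   |apply Zdivide_Zdiv_eq; [lia | apply Z.gcd_divide_r]
                   |apply Z.gcd_div_gcd; auto].
Qed.

Lemma divide_mul_cofactor (e r NN : Z) : (0 < NN)%Z -> (NN | e * r)%Z ->
  (NN / Z.gcd e NN | r)%Z.
Proof.
  intros HN [k Hk].
  assert (HG : Z.gcd e NN <> 0%Z) by (intros E; apply Z.gcd_eq_0_r in E; lia).
  destruct (gcd_cofactors e NN HG) as [Ee [EN Hc]].
  set (G := Z.gcd e NN) in *. set (e' := (e / G)%Z) in *. set (M := (NN / G)%Z) in *.
  apply Z.gauss with e'; [|rewrite Z.gcd_comm; exact Hc].
  exists k. apply Z.mul_reg_l with G; [exact HG|].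
  rewrite Z.mul_assoc, <- Ee, Hk, EN at 1. ring.
Qed.

Lemma coprime_kernel (p q a b : Z) : Z.gcd p q = 1%Z -> q <> 0%Z ->
  (a * p + b * q = 0)%Z -> exists i, a = (i * q)%Z /\ b = (- (i * p))%Z.
Proof.
  intros Hpq Hq E.
  assert (Hd : (q | a)%Z).
  { apply Z.gauss with p; [exists (- b)%Z; lia | rewrite Z.gcd_comm; exact Hpq]. }
  destruct Hd as [i Hi]. exists i. split; [exact Hi|].
  apply Z.mul_reg_r with q; [exact Hq|]. subst a. lia.
Qed.

(* With [A = e p], [B = e q], [p, q] coprime and [M = NN / gcd e NN], [NN] divides
   [l1 A + l2 B] iff [M] divides [l1 p + l2 q]. *)
Lemma lattice_basis (A B NN : Z) : (0 < A)%Z -> (0 < B)%Z -> (0 < NN)%Z ->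
  exists p q u v M : Z, (u * p + v * q = 1)%Z /\ (0 < M)%Z /\ (q * A = p * B)%Z /\
    lattice A B NN (M * u) (M * v) /\
    forall l1 l2, lattice A B NN l1 l2 ->
      exists i j, l1 = (i * q + j * (M * u))%Z /\ l2 = (- (i * p) + j * (M * v))%Z.
Proof.
  intros HA HB HN.
  assert (He : Z.gcd A B <> 0%Z) by (intros E; apply Z.gcd_eq_0_l in E; lia).
  destruct (gcd_cofactors A B He) as [EA [EB Hpq]].
  set (e := Z.gcd A B) in *. set (p := (A / e)%Z) in *. set (q := (B / e)%Z) in *.
  assert (HG : Z.gcd e NN <> 0%Z) by (intros E; apply Z.gcd_eq_0_r in E; lia).
  destruct (gcd_cofactors e NN HG) as [Ee [EN _]].
  set (G := Z.gcd e NN) in *. set (M := (NN / G)%Z) in *.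
  destruct (Z.gcd_bezout p q 1 Hpq) as [u [v Huv]].
  assert (HM : (0 < M)%Z) by (pose proof (Z.gcd_nonneg e NN); nia).
  exists p, q, u, v, M. split; [lia|]. split; [exact HM|]. split; [rewrite EA, EB; ring|].
  split.
  - exists (e / G)%Z. rewrite EA, EB, EN.
    transitivity (M * e * (u * p + v * q))%Z; [ring | rewrite Huv, Ee at 1; ring].
  - intros l1 l2 Hl.
    assert (Hr : (M | l1 * p + l2 * q)%Z).
    { apply divide_mul_cofactor; auto. unfold lattice in Hl. rewrite EA, EB in Hl.
      replace (e * (l1 * p + l2 * q))%Z with (l1 * (e * p) + l2 * (e * q))%Z by ring. exact Hl. }
    destruct Hr as [m Hm].
    assert (Hk : ((l1 - m * M * u) * p + (l2 - m * M * v) * q = 0)%Z).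
    { transitivity (l1 * p + l2 * q - m * M * (u * p + v * q))%Z; [ring|].
      rewrite Huv, Hm. ring. }
    assert (Hq : q <> 0%Z) by (intros Eq0; rewrite Eq0 in EB; lia).
    destruct (coprime_kernel p q _ _ Hpq Hq Hk) as [i [Ei Ej]].
    exists i, m. lia.
Qed.

Lemma lattice_comb A B NN l1 l2 l1' l2' i j : lattice A B NN l1 l2 -> lattice A B NN l1' l2' ->
  lattice A B NN (i * l1 + j * l1')%Z (i * l2 + j * l2')%Z.
Proof.
  unfold lattice. intros H H'.
  replace ((i * l1 + j * l1') * A + (i * l2 + j * l2') * B)%Z
    with (i * (l1 * A + l2 * B) + j * (l1' * A + l2' * B))%Z by ring.
  apply Z.divide_add_r; apply Z.divide_mul_r; auto.
Qed.

Lemma Rabs_lin2_le a b x y : Rabs (a * x + b * y) <= (Rabs a + Rabs b) * (Rabs x + Rabs y).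
Proof.
  eapply Rle_trans; [apply Rabs_triang|]. rewrite !Rabs_mult.
  pose proof (Rabs_pos a). pose proof (Rabs_pos b). pose proof (Rabs_pos x).
  pose proof (Rabs_pos y). nra.
Qed.

Section Torus.
Variables N n1 n2 n3 : nat.
Hypothesis n1_pos : (1 <= n1)%nat.
Hypothesis n12 : (n1 < n2)%nat.
Hypothesis n23 : (n2 < n3)%nat.
Hypothesis N_sum : (n1 + n2 + n3 = N)%nat.
Hypothesis n3_not_half : (2 * n3 <> N)%nat.

Notation g := (Nat.gcd n1 (Nat.gcd n2 n3)).
Notation in_lattice := (lattice (Z.of_nat n1) (Z.of_nat n2) (Z.of_nat N)).
Notation cover := (cover N n1 n2).

Let N_pos : (0 < N)%nat. Proof. lia. Qed.

Variables p q u v M : Z.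
Hypothesis basis_det : (u * p + v * q = 1)%Z.
Hypothesis M_pos : (0 < M)%Z.
Hypothesis q_p_relation : (q * Z.of_nat n1 = p * Z.of_nat n2)%Z.
Hypothesis Mu_Mv_lattice : in_lattice (M * u) (M * v).
Hypothesis lattice_span : forall l1 l2, in_lattice l1 l2 ->
  exists i j, l1 = (i * q + j * (M * u))%Z /\ l2 = (- (i * p) + j * (M * v))%Z.

(* Coordinates of the plane in the lattice basis [(q, -p), (M u, M v)], and back. *)
Definition coord1 (s t : R) : R := IZR v * s - IZR u * t.
Definition coord2 (s t : R) : R := (IZR p * s + IZR q * t) / IZR M.
Definition lift_s (t1 t2 : R) : R := t1 * IZR q + t2 * IZR (M * u).
Definition lift_t (t1 t2 : R) : R := - (t1 * IZR p) + t2 * IZR (M * v).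

Lemma basis_det_R : IZR u * IZR p + IZR v * IZR q = 1.
Proof. rewrite <- !mult_IZR, <- plus_IZR, basis_det. auto. Qed.

Lemma M_R_pos : 0 < IZR M.
Proof. apply IZR_lt. exact M_pos. Qed.

Lemma coord_lift t1 t2 : coord1 (lift_s t1 t2) (lift_t t1 t2) = t1 /\
  coord2 (lift_s t1 t2) (lift_t t1 t2) = t2.
Proof.
  unfold coord1, coord2, lift_s, lift_t. rewrite !mult_IZR.
  pose proof basis_det_R. pose proof M_R_pos. split.
  - transitivity (t1 * (IZR u * IZR p + IZR v * IZR q)); [ring | rewrite H; ring].
  - transitivity (t2 * (IZR u * IZR p + IZR v * IZR q)); [field; lra | rewrite H; ring].
Qed.

Lemma lift_coord s t : lift_s (coord1 s t) (coord2 s t) = s /\ lift_t (coord1 s t) (coord2 s t) = t.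
Proof.
  unfold coord1, coord2, lift_s, lift_t. rewrite !mult_IZR.
  pose proof basis_det_R. pose proof M_R_pos. split.
  - transitivity (s * (IZR u * IZR p + IZR v * IZR q)); [field; lra | rewrite H; ring].
  - transitivity (t * (IZR u * IZR p + IZR v * IZR q)); [field; lra | rewrite H; ring].
Qed.

Lemma lift_int_lattice m1 m2 :
  in_lattice (m1 * q + m2 * (M * u))%Z (m1 * - p + m2 * (M * v))%Z.
Proof.
  apply lattice_comb; [|exact Mu_Mv_lattice].
  exists 0%Z. lia.
Qed.

Lemma lift_add t1 t2 t1' t2' :
  lift_s (t1 + t1') (t2 + t2') = lift_s t1 t2 + lift_s t1' t2' /\
  lift_t (t1 + t1') (t2 + t2') = lift_t t1 t2 + lift_t t1' t2'.
Proof. unfold lift_s, lift_t. split; ring. Qed.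

Lemma lift_int m1 m2 :
  lift_s (IZR m1) (IZR m2) = IZR (m1 * q + m2 * (M * u)) /\
  lift_t (IZR m1) (IZR m2) = IZR (m1 * - p + m2 * (M * v)).
Proof. unfold lift_s, lift_t. rewrite !plus_IZR, !mult_IZR, opp_IZR. split; ring. Qed.

Lemma coord_add s t s' t' : coord1 (s + s') (t + t') = coord1 s t + coord1 s' t' /\
  coord2 (s + s') (t + t') = coord2 s t + coord2 s' t'.
Proof. unfold coord1, coord2. pose proof M_R_pos. split; [ring | field; lra]. Qed.

Lemma coord_lattice_shift s t l1 l2 : in_lattice l1 l2 -> exists i j : Z,
  coord1 (s + IZR l1) (t + IZR l2) = coord1 s t + IZR i /\
  coord2 (s + IZR l1) (t + IZR l2) = coord2 s t + IZR j.
Proof.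
  intros Hl. destruct (lattice_span l1 l2 Hl) as [i [j [-> ->]]]. exists i, j.
  destruct (lift_int i j) as [Es Et]. rewrite Z.mul_opp_r in Et. rewrite <- Es, <- Et.
  destruct (coord_lift (IZR i) (IZR j)) as [C1 C2].
  destruct (coord_add s t (lift_s (IZR i) (IZR j)) (lift_t (IZR i) (IZR j))) as [-> ->].
  rewrite C1, C2. auto.
Qed.

Definition torus_point (c : nat) (s t : R) : tori_pt :=
  (c, (cos (2 * PI * coord1 s t), sin (2 * PI * coord1 s t),
       cos (2 * PI * coord2 s t), sin (2 * PI * coord2 s t))).

Lemma torus_point_period c s t l1 l2 : in_lattice l1 l2 ->
  torus_point c (s + IZR l1) (t + IZR l2) = torus_point c s t.
Proof.
  intros Hl. destruct (coord_lattice_shift s t l1 l2 Hl) as [i [j [E1 E2]]].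
  unfold torus_point. rewrite E1, E2, !Rmult_plus_distr_l.
  destruct (cos_sin_period_Z (2 * PI * coord1 s t) i) as [-> ->].
  destruct (cos_sin_period_Z (2 * PI * coord2 s t) j) as [-> ->]. auto.
Qed.

Lemma torus_point_in_tori c s t : (c < g)%nat -> tori g (torus_point c s t).
Proof.
  intros Hc. unfold torus_point, tori.
  pose proof (sin2_cos2 (2 * PI * coord1 s t)). pose proof (sin2_cos2 (2 * PI * coord2 s t)).
  unfold Rsqr in *. repeat split; auto; lra.
Qed.

Definition torus_lip : R := 4 * PI * (Rabs (IZR u) + Rabs (IZR v) + Rabs (IZR p) + Rabs (IZR q)).

Lemma torus_point_lipschitz c s t s' t' :
  tori_dist (torus_point c s t) (torus_point c s' t')
  <= torus_lip * (Rabs (s - s') + Rabs (t - t')).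
Proof.
  unfold torus_point, tori_dist. rewrite Nat.eqb_refl.
  pose proof PI_RGT_0. set (D := Rabs (s - s') + Rabs (t - t')).
  assert (D0 : 0 <= D)
    by (unfold D; pose proof (Rabs_pos (s - s')); pose proof (Rabs_pos (t - t')); lra).
  assert (A1 : Rabs (2 * PI * coord1 s t - 2 * PI * coord1 s' t')
               <= 2 * PI * ((Rabs (IZR v) + Rabs (IZR u)) * D)).
  { replace (2 * PI * coord1 s t - 2 * PI * coord1 s' t')
      with (2 * PI * (IZR v * (s - s') + - IZR u * (t - t'))) by (unfold coord1; ring).
    rewrite Rabs_mult, (Rabs_right (2 * PI)) by lra. apply Rmult_le_compat_l; [lra|].
    rewrite <- (Rabs_Ropp (IZR u)). apply Rabs_lin2_le. }
  assert (A2 : Rabs (2 * PI * coord2 s t - 2 * PI * coord2 s' t')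
               <= 2 * PI * ((Rabs (IZR p) + Rabs (IZR q)) * D)).
  { pose proof M_R_pos. assert (1 <= IZR M) by (apply IZR_le; lia).
    replace (2 * PI * coord2 s t - 2 * PI * coord2 s' t')
      with (2 * PI * (IZR p * (s - s') + IZR q * (t - t')) * / IZR M)
      by (unfold coord2; field; lra).
    rewrite Rabs_mult, (Rabs_mult (2 * PI)), (Rabs_right (2 * PI)), (Rabs_right (/ IZR M))
      by (apply Rle_ge; try apply Rlt_le, Rinv_0_lt_compat; lra).
    pose proof (Rabs_lin2_le (IZR p) (IZR q) (s - s') (t - t')) as HX. fold D in HX.
    assert (0 < / IZR M <= 1) by (split; [apply Rinv_0_lt_compat; lra
                                         | rewrite <- Rinv_1; apply Rinv_le_contravar; lra]).
    pose proof (Rabs_pos (IZR p * (s - s') + IZR q * (t - t'))).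
    rewrite Rmult_assoc. apply Rmult_le_compat_l; [lra | nra]. }
  destruct (cos_sin_lipschitz (2 * PI * coord1 s t) (2 * PI * coord1 s' t')).
  destruct (cos_sin_lipschitz (2 * PI * coord2 s t) (2 * PI * coord2 s' t')).
  unfold torus_lip. fold D. nra.
Qed.

Definition torus_angles (y : tori_pt) : R * R :=
  match y with (_, (a, b, c, d)) => (angle a b / (2 * PI), angle c d / (2 * PI)) end.

Definition from_torus (y : tori_pt) : nat -> R :=
  cover (fst y) (lift_s (fst (torus_angles y)) (snd (torus_angles y)))
                (lift_t (fst (torus_angles y)) (snd (torus_angles y))).

Definition cover_param (x : nat -> R) (w : nat * R * R) : Prop :=
  (fst (fst w) < g)%nat /\ cover (fst (fst w)) (snd (fst w)) (snd w) = x.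

Definition to_torus (x : nat -> R) : tori_pt :=
  let w := epsilon (inhabits (0%nat, 0, 0)) (cover_param x) in
  torus_point (fst (fst w)) (snd (fst w)) (snd w).

Lemma to_torus_spec x : realization N n1 n2 n3 x ->
  exists c s t, (c < g)%nat /\ cover c s t = x /\ to_torus x = torus_point c s t.
Proof.
  intros Hx. destruct (cover_surjective N n1 n2 n3 n1_pos n12 n23 N_sum n3_not_half x Hx)
    as [c [s [t [Hc Hp]]]].
  assert (H : cover_param x (epsilon (inhabits (0%nat, 0, 0)) (cover_param x)))
    by (apply epsilon_spec; exists (c, s, t); split; auto).
  unfold to_torus. destruct (epsilon (inhabits (0%nat, 0, 0)) (cover_param x)) as [[c' s'] t'].
  destruct H as [H1 H2]. exists c', s', t'. auto.
Qed.

Lemma to_torus_in_tori x : realization N n1 n2 n3 x -> tori g (to_torus x).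
Proof.
  intros Hx. destruct (to_torus_spec x Hx) as [c [s [t [Hc [_ ->]]]]].
  apply torus_point_in_tori, Hc.
Qed.

Lemma from_torus_in_realization y : realization N n1 n2 n3 (from_torus y).
Proof. apply cover_in_realization; lia. Qed.

Lemma lift_torus_angles c s t : exists m1 m2 : Z,
  lift_s (fst (torus_angles (torus_point c s t))) (snd (torus_angles (torus_point c s t)))
    = s + IZR (m1 * q + m2 * (M * u)) /\
  lift_t (fst (torus_angles (torus_point c s t))) (snd (torus_angles (torus_point c s t)))
    = t + IZR (m1 * - p + m2 * (M * v)).
Proof.
  destruct (angle_cos_sin (2 * PI * coord1 s t)) as [m1 E1].
  destruct (angle_cos_sin (2 * PI * coord2 s t)) as [m2 E2].
  exists m1, m2. simpl. rewrite E1, E2. pose proof PI_RGT_0.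
  replace ((2 * PI * coord1 s t + 2 * PI * IZR m1) / (2 * PI)) with (coord1 s t + IZR m1)
    by (field; lra).
  replace ((2 * PI * coord2 s t + 2 * PI * IZR m2) / (2 * PI)) with (coord2 s t + IZR m2)
    by (field; lra).
  destruct (lift_add (coord1 s t) (coord2 s t) (IZR m1) (IZR m2)) as [-> ->].
  destruct (lift_coord s t) as [-> ->]. destruct (lift_int m1 m2) as [-> ->]. auto.
Qed.

Lemma from_to_torus x : realization N n1 n2 n3 x -> from_torus (to_torus x) = x.
Proof.
  intros Hx. destruct (to_torus_spec x Hx) as [c [s [t [Hc [<- ->]]]]].
  unfold from_torus. destruct (lift_torus_angles c s t) as [m1 [m2 [-> ->]]].
  apply cover_period; [lia | apply lift_int_lattice].
Qed.

Lemma torus_point_lift k a b c d : a * a + b * b = 1 -> c * c + d * d = 1 ->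
  torus_point k (lift_s (angle a b / (2 * PI)) (angle c d / (2 * PI)))
                (lift_t (angle a b / (2 * PI)) (angle c d / (2 * PI))) = (k, (a, b, c, d)).
Proof.
  intros Hab Hcd. unfold torus_point.
  destruct (coord_lift (angle a b / (2 * PI)) (angle c d / (2 * PI))) as [-> ->].
  pose proof PI_RGT_0.
  replace (2 * PI * (angle a b / (2 * PI))) with (angle a b) by (field; lra).
  replace (2 * PI * (angle c d / (2 * PI))) with (angle c d) by (field; lra).
  rewrite !cos_angle, !sin_angle by auto. auto.
Qed.

Lemma to_from_torus y : tori g y -> to_torus (from_torus y) = y.
Proof.
  destruct y as [k [[[a b] c] d]]. intros [Hk [Hab Hcd]].
  destruct (to_torus_spec _ (from_torus_in_realization (k, (a, b, c, d))))
    as [c' [s' [t' [Hc' [Hp ->]]]]].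
  unfold from_torus in Hp. simpl in Hp.
  destruct (cover_injective_mod_lattice N n1 n2 n3 n1_pos n12 n23 N_sum n3_not_half
    _ _ _ _ _ _ Hk Hc' (eq_sym Hp)) as [-> [l1 [l2 [Hl [-> ->]]]]].
  rewrite torus_point_period by exact Hl. apply torus_point_lift; auto.
Qed.

Lemma to_torus_continuous : cont_on (distN N) tori_dist (realization N n1 n2 n3) to_torus.
Proof.
  intros x Hx eps Heps.
  destruct (to_torus_spec x Hx) as [c [s [t [Hc [<- E]]]]].
  destruct (exists_star_vertex N n1 n2 n3 n1_pos n12 n23 N_sum n3_not_half s t)
    as [x0 [y0 Hmu]].
  assert (KT : 0 <= torus_lip).
  { unfold torus_lip. pose proof PI_RGT_0. pose proof (Rabs_pos (IZR u)).
    pose proof (Rabs_pos (IZR v)). pose proof (Rabs_pos (IZR p)). pose proof (Rabs_pos (IZR q)).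
    nra. }
  exists (Rmin (hat (s - IZR x0) (t - IZR y0)) (eps / (8 * torus_lip + 1))).
  split; [apply Rmin_pos; [auto | apply Rdiv_lt_0_compat; lra]|].
  intros y Hy Hd.
  pose proof (Rmin_l (hat (s - IZR x0) (t - IZR y0)) (eps / (8 * torus_lip + 1))).
  pose proof (Rmin_r (hat (s - IZR x0) (t - IZR y0)) (eps / (8 * torus_lip + 1))).
  destruct (to_torus_spec y Hy) as [c' [s' [t' [Hc' [<- E']]]]].
  destruct (cover_recover N n1 n2 n3 n1_pos n12 n23 N_sum n3_not_half c c' s t s' t' x0 y0
    Hc Hc' Hmu ltac:(lra)) as [-> [l1 [l2 [Hl [B1 B2]]]]].
  rewrite E, E', <- (torus_point_period c s t l1 l2 Hl).
  eapply Rle_lt_trans; [apply torus_point_lipschitz|].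
  set (d := distN N (cover c s t) (cover c s' t')) in *.
  assert (Hd' : 8 * torus_lip * d < eps).
  { apply Rle_lt_trans with (8 * torus_lip * (eps / (8 * torus_lip + 1))).
    - apply Rmult_le_compat_l; lra.
    - apply (Rmult_lt_reg_r (8 * torus_lip + 1)); [lra|]. field_simplify; lra. }
  apply Rle_lt_trans with (torus_lip * (8 * d)); [apply Rmult_le_compat_l; lra | lra].
Qed.

Definition lift_lip : R := Rabs (IZR q) + Rabs (IZR (M * u)) + Rabs (IZR p) + Rabs (IZR (M * v)).

Lemma lift_lipschitz t1 t2 t1' t2' :
  Rabs (lift_s t1 t2 - lift_s t1' t2') + Rabs (lift_t t1 t2 - lift_t t1' t2')
  <= lift_lip * (Rabs (t1 - t1') + Rabs (t2 - t2')).
Proof.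
  replace (lift_s t1 t2 - lift_s t1' t2') with (IZR q * (t1 - t1') + IZR (M * u) * (t2 - t2'))
    by (unfold lift_s; ring).
  replace (lift_t t1 t2 - lift_t t1' t2') with (- IZR p * (t1 - t1') + IZR (M * v) * (t2 - t2'))
    by (unfold lift_t; ring).
  pose proof (Rabs_lin2_le (IZR q) (IZR (M * u)) (t1 - t1') (t2 - t2')).
  pose proof (Rabs_lin2_le (- IZR p) (IZR (M * v)) (t1 - t1') (t2 - t2')).
  rewrite Rabs_Ropp in H0. unfold lift_lip. lra.
Qed.

Lemma from_torus_continuous : cont_on tori_dist (distN N) (tori g) from_torus.
Proof.
  intros [k [[[a b] c] d]] [_ [Hab Hcd]] eps Heps.
  assert (KB : 0 <= lift_lip) by (unfold lift_lip; pose proof (Rabs_pos (IZR q));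
    pose proof (Rabs_pos (IZR (M * u))); pose proof (Rabs_pos (IZR p));
    pose proof (Rabs_pos (IZR (M * v))); lra).
  set (e := Rmin eps 1). assert (He : 0 < e <= eps /\ e <= 1)
    by (unfold e; pose proof (Rmin_l eps 1); pose proof (Rmin_r eps 1);
        repeat split; try lra; apply Rmin_pos; lra).
  set (del := e / (64 * (lift_lip + 1))).
  assert (Hdel : 0 < del) by (apply Rdiv_lt_0_compat; lra).
  assert (Edel : del * (lift_lip + 1) = e / 64) by (unfold del; field; lra).
  exists del. split; [exact Hdel|].
  intros [k' [[[a' b'] c'] d']] [_ [Hab' Hcd']] Hd. unfold tori_dist in Hd.
  pose proof (Rabs_pos (a - a')). pose proof (Rabs_pos (b - b')).
  pose proof (Rabs_pos (c - c')). pose proof (Rabs_pos (d - d')).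
  destruct (Nat.eqb_spec k k') as [<-|]; [|nra].
  destruct (angle_close a b a' b' del Hab Hab' ltac:(lra)) as [m1 Hm1].
  destruct (angle_close c d c' d' del Hcd Hcd' ltac:(lra)) as [m2 Hm2].
  unfold from_torus; simpl.
  set (t1 := angle a b / (2 * PI)) in *. set (t2 := angle c d / (2 * PI)) in *.
  set (t1' := angle a' b' / (2 * PI)) in *. set (t2' := angle c' d' / (2 * PI)) in *.
  replace t1' with ((t1' - IZR m1) + IZR m1) by ring.
  replace t2' with ((t2' - IZR m2) + IZR m2) by ring.
  destruct (lift_add (t1' - IZR m1) (t2' - IZR m2) (IZR m1) (IZR m2)) as [-> ->].
  destruct (lift_int m1 m2) as [-> ->].
  rewrite cover_period by (try lia; apply lift_int_lattice).
  pose proof (lift_lipschitz t1 t2 (t1' - IZR m1) (t2' - IZR m2)) as HL.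
  replace (t1 - (t1' - IZR m1)) with (- (t1' - t1 - IZR m1)) in HL by ring.
  replace (t2 - (t2' - IZR m2)) with (- (t2' - t2 - IZR m2)) in HL by ring.
  rewrite !Rabs_Ropp in HL.
  assert (Hsum : lift_lip * (Rabs (t1' - t1 - IZR m1) + Rabs (t2' - t2 - IZR m2)) < e / 32)
    by nra.
  pose proof (Rabs_pos (lift_s t1 t2 - lift_s (t1' - IZR m1) (t2' - IZR m2))).
  pose proof (Rabs_pos (lift_t t1 t2 - lift_t (t1' - IZR m1) (t2' - IZR m2))).
  eapply Rle_lt_trans; [apply cover_lipschitz; [lia | lra | lra]| lra].
Qed.

Theorem realization_homeomorphic_tori :
  homeomorphic (distN N) tori_dist (realization N n1 n2 n3) (tori g).
Proof.
  exists to_torus, from_torus.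
  split; [exact to_torus_in_tori|]. split; [intros; apply from_torus_in_realization|].
  split; [exact from_to_torus|]. split; [exact to_from_torus|].
  split; [exact to_torus_continuous | exact from_torus_continuous].
Qed.

End Torus.

Theorem theorem6p5 (N n1 n2 n3 : nat) :
  (1 <= n1)%nat -> (n1 < n2)%nat -> (n2 < n3)%nat -> (n3 < N)%nat ->
  (n1 + n2 + n3 = N)%nat -> (2 * n3 <> N)%nat ->
  homeomorphic (distN N) tori_dist (realization N n1 n2 n3)
    (tori (Nat.gcd n1 (Nat.gcd n2 n3))).
Proof.
  intros Hn1 H12 H23 _ Hsum Hhalf.
  destruct (lattice_basis (Z.of_nat n1) (Z.of_nat n2) (Z.of_nat N))
    as [p [q [u [v [M [Huv [HM [Hqp [HMuv Hspan]]]]]]]]]; try lia.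
  eapply realization_homeomorphic_tori; eauto.
Qed.
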